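(* Let $\mathcal{M}$ be a matroid on $[m]$ with base polytope $P$, let $x_0\in P$, and let $\hat x=\chi(S)$ be the (random) extreme point of $P$ output by randomized pipage rounding started at $x_0$. Let $f:2^{[m]}\to\mathbb{R}$ be non-negative, monotone non-decreasing and submodular with marginals $f(T\cup\{i\})-f(T)\in[0,1]$, let $F(x)=\mathbb{E}_{X\sim\mathcal{D}(x)}[f(X)]$ be its multilinear extension, and let $\mu=F(x_0)$. Then for every $\delta\in[0,1)$, \[ \Pr\big[f(S)\le(1-\delta)\mu\big]\le \exp(-\delta^2\mu/2). \]
   Context: The base polytope of a matroid is the convex hull of the characteristic vectors $\chi(B)\in\{0,1\}^m$ of its bases. For $x\in[0,1]^m$, $\mathcal{D}(x)$ is the product distribution on $\{0,1\}^m$ (identified with subsets of $[m]$) with $\Pr[X_i=1]=x_i$ independently. Randomized pipage rounding started at $x_0\in P$: set $p=x_0$; while $p$ is not an extreme point of $P$, choose distinct $a,b\in[m]$ such that $p+z(e_a-e_b)\in P$ for all $z$ in some open neighborhood of $0$ (such $a,b$ exist whenever $p$ is not extreme), let $\ell=\min\{z: p+z(e_a-e_b)\in P\}<0<u=\max\{z:p+z(e_a-e_b)\in P\}$, and replace $p$ by $p+\ell(e_a-e_b)$ with probability $u/(u-\ell)$ and by $p+u(e_a-e_b)$ with probability $-\ell/(u-\ell)$ (independently of the past given the current state); output the final extreme point. The choice of $a,b$ may be arbitrary (subject to the stated condition). *)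

From HB Require Import structures.
From mathcomp Require Import all_boot.
From Stdlib Require Import Reals.

Set Implicit Arguments.
Unset Strict Implicit.
Unset Printing Implicit Defensive.

Definition point (m : nat) := 'I_m -> R.

Definition chi (m : nat) (S : {set 'I_m}) : point m :=
  fun i => if i \in S then 1%R else 0%R.

Definition is_matroid_bases (m : nat) (B : {set {set 'I_m}}) : Prop :=
  B != set0 /\
  forall B1 B2, B1 \in B -> B2 \in B ->
    forall x, x \in B1 :\: B2 ->
      exists y, y \in B2 :\: B1 /\ (y |: (B1 :\ x)) \in B.

Definition in_base_polytope (m : nat) (B : {set {set 'I_m}}) (x : point m) : Prop :=
  exists lam : {set 'I_m} -> R,
    (forall S, (0 <= lam S)%R) /\
    (forall S, S \notin B -> lam S = 0%R) /\
    \big[Rplus/0%R]_(S : {set 'I_m}) lam S = 1%R /\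
    forall i, x i = \big[Rplus/0%R]_(S : {set 'I_m}) (lam S * chi S i)%R.

Definition extreme (m : nat) (P : point m -> Prop) (x : point m) : Prop :=
  P x /\
  forall (y z : point m) (t : R), P y -> P z -> (0 < t < 1)%R ->
    (forall i, x i = t * y i + (1 - t) * z i)%R ->
    forall i, y i = z i.

Definition move (m : nat) (p : point m) (a b : 'I_m) (z : R) : point m :=
  fun i => (p i + z * ((if i == a then 1 else 0) - (if i == b then 1 else 0)))%R.

Definition scale_entry (m : nat) (c : R) (wp : R * point m) : R * point m :=
  ((c * wp.1)%R, wp.2).

(* pipage P p D : D (a finite list of (probability, output point)) is the output
   distribution of randomized pipage rounding started at p, for SOME (adaptive,
   history-dependent) choice of the pairs (a,b) along the run. *)
Inductive pipage (m : nat) (P : point m -> Prop) : point m -> seq (R * point m) -> Prop :=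
| pipage_stop p : extreme P p -> pipage P p [:: (1%R, p)]
| pipage_step p (a b : 'I_m) (l u : R) D1 D2 :
    ~ extreme P p -> a != b ->
    (exists eps, (0 < eps)%R /\ forall z, (Rabs z < eps)%R -> P (move p a b z)) ->
    P (move p a b l) -> (forall z, P (move p a b z) -> (l <= z)%R) ->
    P (move p a b u) -> (forall z, P (move p a b z) -> (z <= u)%R) ->
    pipage P (move p a b l) D1 ->
    pipage P (move p a b u) D2 ->
    pipage P p (map (scale_entry (u / (u - l))%R) D1 ++
                map (scale_entry (- l / (u - l))%R) D2).

Definition supp (m : nat) (x : point m) : {set 'I_m} :=
  [set i | if Req_EM_T (x i) 1%R then true else false].

Definition prob_f_le (m : nat) (D : seq (R * point m)) (f : {set 'I_m} -> R) (c : R) : R :=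
  foldr (fun wp acc => ((if Rle_dec (f (supp wp.2)) c then wp.1 else 0) + acc)%R) 0%R D.

Definition multilinear (m : nat) (f : {set 'I_m} -> R) (x : point m) : R :=
  \big[Rplus/0%R]_(S : {set 'I_m})
     (f S * \big[Rmult/1%R]_(i : 'I_m) (if i \in S then x i else 1 - x i))%R.

From HB Require Import structures.
From mathcomp Require Import all_boot.
From Stdlib Require Import Reals Lra.
From Stdlib Require Import FunctionalExtensionality Classical.
From Coquelicot Require Coquelicot.

(* Write E_x[H] := multilinear H x for the expectation of H under the product
   distribution D(x), and fix a parameter lam in [0,1].
   1. Independent rounding.  For f >= 0 monotone submodular with marginals in
      [0,1], E_x[exp(-lam f)] <= exp((-lam + lam^2/2) E_x[f]) for x in [0,1]^m.
      This is proved by induction on the number of fractional coordinates of x,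
      using exp(-y) <= 1 - y + y^2/2 and the Harris inequality.
   2. Pipage steps.  Along a direction e_a - e_b the map z |-> E_{p+z(e_a-e_b)}[H]
      is a concave quadratic whenever H is supermodular on the pair {a,b}, as
      exp(-lam f) is; so one random pipage step does not increase E[exp(-lam f)].
   3. Every extreme point of the hull of 0/1 vectors is some chi(S), where
      [f(S) <= c] <= exp(lam c) exp(-lam f(S)); by induction on the run,
      Pr[f(S) <= c] <= exp(lam c) E_{x0}[exp(-lam f)].
   Taking lam = delta and c = (1 - delta) mu in 3 and 1 gives the theorem. *)

(* exp(-y) <= 1 - y + y^2/2 for y >= 0: the function (1 - t + t^2/2) e^t has
   derivative t^2/2 e^t >= 0, hence is at least its value 1 at t = 0. *)
Module ExpTaylor.
Import Coquelicot.Coquelicot.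
Open Scope R_scope.

Lemma exp_neg_le_quadratic y : 0 <= y -> exp (- y) <= 1 - y + y * y / 2.
Proof.
intros Hy.
set (g := fun t => (1 - t + t * t / 2) * exp t).
assert (Hd : forall t, is_derive g t (t * t / 2 * exp t)).
{ intros t; unfold g; auto_derive; [exact I | field]. }
destruct (MVT_gen g 0 y (fun t => t * t / 2 * exp t)) as [c [Hc Heq]].
- intros; apply Hd.
- intros x _; apply continuity_pt_filterlim, (ex_derive_continuous g x).
  eexists; apply Hd.
- unfold g in Heq; rewrite exp_0 in Heq.
  assert (Hg : 0 <= c * c / 2 * exp c * (y - 0)).
  { apply Rmult_le_pos; [|lra].
    apply Rmult_le_pos; [nra | left; apply exp_pos]. }
  assert (Hinv : exp (- y) * exp y = 1).
  { rewrite <- exp_plus; replace (- y + y) with 0 by ring; apply exp_0. }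
  pose proof (exp_pos y); pose proof (exp_pos (- y)); nra.
Qed.
End ExpTaylor.

Set Implicit Arguments.
Unset Strict Implicit.
Unset Printing Implicit Defensive.

Local Open Scope R_scope.

Lemma RplusA : associative Rplus. Proof. by move=> x y z; rewrite Rplus_assoc. Qed.
Lemma RmultA : associative Rmult. Proof. by move=> x y z; rewrite Rmult_assoc. Qed.
HB.instance Definition _ := Monoid.isComLaw.Build R 0 Rplus RplusA Rplus_comm Rplus_0_l.
HB.instance Definition _ := Monoid.isComLaw.Build R 1 Rmult RmultA Rmult_comm Rmult_1_l.
HB.instance Definition _ := Monoid.isMulLaw.Build R 0 Rmult Rmult_0_l Rmult_0_r.
HB.instance Definition _ :=
  Monoid.isAddLaw.Build R Rmult Rplus Rmult_plus_distr_r Rmult_plus_distr_l.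

Lemma sum_Rle (I : finType) (P : pred I) (F G : I -> R) :
  (forall j, P j -> F j <= G j) ->
  \big[Rplus/0]_(j | P j) F j <= \big[Rplus/0]_(j | P j) G j.
Proof.
move=> hFG; apply: (big_ind2 (fun a b => a <= b)) => //; [lra | move=> *; lra].
Qed.

Lemma sum_Rge0 (I : finType) (P : pred I) (F : I -> R) :
  (forall j, P j -> 0 <= F j) -> 0 <= \big[Rplus/0]_(j | P j) F j.
Proof. by move=> hF; apply: (big_ind (fun a => 0 <= a)) => //; [lra | move=> *; lra]. Qed.

Lemma exp_le_mono a b : a <= b -> exp a <= exp b.
Proof.
by case/Rle_lt_or_eq_dec=> [/exp_increasing/Rlt_le | ->]; [| apply: Rle_refl].
Qed.

Lemma exp_neg_scaled_le lam u : 0 <= lam <= 1 -> 0 <= u <= 1 ->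
  exp (- (lam * u)) <= 1 + (- lam + lam * lam / 2) * u.
Proof.
move=> hlam hu; have hlu : 0 <= lam * u by apply: Rmult_le_pos; lra.
apply: (Rle_trans _ _ _ (ExpTaylor.exp_neg_le_quadratic _ hlu)).
have : lam * lam * (u * u) <= lam * lam * u by apply: Rmult_le_compat_l; nra.
nra.
Qed.

(* The inequality behind supermodularity of exp(-lam f): if fab + f0 <= fa + fb
   and f0 <= fa, fb, then e^{-lam fa} + e^{-lam fb} <= e^{-lam f0} + e^{-lam fab}. *)
Lemma exp_neg_supermod lam f0 fa fb fab : 0 <= lam ->
  f0 <= fa -> f0 <= fb -> fab + f0 <= fa + fb ->
  exp (- lam * fa) + exp (- lam * fb) <= exp (- lam * f0) + exp (- lam * fab).
Proof.
move=> hlam ha hb hab.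
set e0 := exp (- lam * f0); set s := exp (- lam * (fa - f0)).
set r := exp (- lam * (fb - f0)).
have ea : exp (- lam * fa) = e0 * s by rewrite -exp_plus; congr exp; ring.
have eb : exp (- lam * fb) = e0 * r by rewrite -exp_plus; congr exp; ring.
have eab : e0 * s * r <= exp (- lam * fab).
  by rewrite -!exp_plus; apply: exp_le_mono; nra.
have s1 : s <= 1 by rewrite -exp_0; apply: exp_le_mono; nra.
have r1 : r <= 1 by rewrite -exp_0; apply: exp_le_mono; nra.
have : 0 <= e0 * ((1 - s) * (1 - r)).
  by apply: Rmult_le_pos; [left; apply: exp_pos | apply: Rmult_le_pos; lra].
rewrite ea eb; nra.
Qed.

Section ProductExpectation.
Variable m : nat.
Implicit Types (x : point m) (S T : {set 'I_m}) (H : {set 'I_m} -> R) (i : 'I_m).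

Definition weight x S : R :=
  \big[Rmult/1]_i (if i \in S then x i else 1 - x i).

Definition weight_off x i S : R :=
  \big[Rmult/1]_(j | j != i) (if j \in S then x j else 1 - x j).

Definition pin x i (v : R) : point m := fun j => if j == i then v else x j.

Definition in01 x := forall j, 0 <= x j <= 1.

Lemma multilinearE x H :
  multilinear H x = \big[Rplus/0]_S (H S * weight x S).
Proof. by []. Qed.

Lemma weight_ge0 x S : in01 x -> 0 <= weight x S.
Proof.
move=> hx; apply: (big_ind (fun a => 0 <= a)); [lra | exact: Rmult_le_pos |].
by move=> j _; case: (j \in S); have := hx j; lra.
Qed.

Lemma in01_pin x i v : in01 x -> 0 <= v <= 1 -> in01 (pin x i v).
Proof. by move=> hx hv j; rewrite /pin; case: eqP. Qed.

Lemma ml_le x H1 H2 : in01 x -> (forall S, H1 S <= H2 S) ->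
  multilinear H1 x <= multilinear H2 x.
Proof.
move=> hx hle; apply: sum_Rle => S _.
exact: Rmult_le_compat_r (weight_ge0 S hx) (hle S).
Qed.

Lemma ml_ge0 x H : in01 x -> (forall S, 0 <= H S) -> 0 <= multilinear H x.
Proof.
by move=> hx hH; apply: sum_Rge0 => S _; apply: Rmult_le_pos; [| exact: weight_ge0].
Qed.

Lemma ml_add x H1 H2 :
  multilinear (fun S => H1 S + H2 S) x = multilinear H1 x + multilinear H2 x.
Proof. by rewrite /multilinear -big_split /=; apply: eq_bigr => S _; ring. Qed.

Lemma ml_scale x H k : multilinear (fun S => k * H S) x = k * multilinear H x.
Proof. by rewrite /multilinear big_distrr /=; apply: eq_bigr => S _; ring. Qed.

Lemma weight_chi S0 S : weight (chi S0) S = if S == S0 then 1 else 0.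
Proof.
case: eqP => [-> | /eqP neq].
  by apply: big1 => j _; rewrite /chi; case: (j \in S0); ring.
have /existsP [j hj] : [exists j, (j \in S) != (j \in S0)].
  by apply: contraR neq => /existsPn same; apply/eqP/setP => j; apply/eqP/negPn.
rewrite /weight (bigD1 j) //=.
by move: hj; rewrite /chi; case: (j \in S); case: (j \in S0) => //= _; ring.
Qed.

Lemma ml_chi S0 H : multilinear H (chi S0) = H S0.
Proof.
rewrite multilinearE (bigD1 S0) //= big1 => [|S /negbTE hS].
  by rewrite weight_chi eqxx; ring.
by rewrite weight_chi hS; ring.
Qed.

Lemma sum_pair_coord (F : {set 'I_m} -> R) i :
  \big[Rplus/0]_S F S = \big[Rplus/0]_(S : {set 'I_m} | i \notin S) (F S + F (i |: S)).
Proof.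
pose toggle := fun S : {set 'I_m} => if i \in S then S :\ i else i |: S.
have toggleK : involutive toggle.
  move=> S; rewrite /toggle; case: (boolP (i \in S)) => hi.
    by rewrite setD11 setD1K.
  by rewrite setU11 setU1K.
rewrite (bigID (fun S => i \in S)) /= Rplus_comm big_split /=; congr (_ + _).
rewrite (reindex_inj (inv_inj toggleK)) /=; apply: eq_big => S; rewrite /toggle.
  by case: (boolP (i \in S)) => hi; rewrite ?setD11 ?setU11.
by case: ifP => // _; rewrite setD11.
Qed.

Lemma ml_split x i H :
  multilinear H x = \big[Rplus/0]_(S : {set 'I_m} | i \notin S)
    (weight_off x i S * ((1 - x i) * H S + x i * H (i |: S))).
Proof.
have weight_split S : weight x S =
    (if i \in S then x i else 1 - x i) * weight_off x i S by rewrite /weight (bigD1 i).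
have off_setU1 S : weight_off x i (i |: S) = weight_off x i S.
  by apply: eq_bigr => j hj; rewrite in_setU1 (negbTE hj).
rewrite multilinearE (sum_pair_coord _ i); apply: eq_bigr => S /negbTE hi.
by rewrite !weight_split off_setU1 setU11 hi; ring.
Qed.

Lemma ml_pin x i v H :
  multilinear H (pin x i v) = \big[Rplus/0]_(S : {set 'I_m} | i \notin S)
    (weight_off x i S * ((1 - v) * H S + v * H (i |: S))).
Proof.
rewrite (ml_split _ i) /pin eqxx; apply: eq_bigr => S _; congr (_ * _).
by apply: eq_bigr => j /negbTE ->.
Qed.

Lemma ml_condition x i H :
  multilinear H x =
  (1 - x i) * multilinear H (pin x i 0) + x i * multilinear H (pin x i 1).
Proof.
rewrite (ml_split _ i) !ml_pin !big_distrr -big_split /=.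
by apply: eq_bigr => S _; ring.
Qed.

Lemma ml_pin1 x i H :
  multilinear H (pin x i 1) = multilinear (fun S => H (i |: S)) (pin x i 0).
Proof.
rewrite !ml_pin; apply: eq_bigr => S _; rewrite setUA setUid; ring.
Qed.

(* Points all of whose coordinates are 0 or 1 are vertices chi(S); induction on
   the number of fractional coordinates reduces statements about all points to
   vertices and to a one-coordinate step. *)
Definition fractional (r : R) : bool :=
  if Req_EM_T r 0 then false else if Req_EM_T r 1 then false else true.

Definition num_fractional x := #|[set j | fractional (x j)]|.

Lemma pin_num_fractional x i v : fractional (x i) -> v = 0 \/ v = 1 ->
  (num_fractional (pin x i v) < num_fractional x)%nat.
Proof.
move=> hi hv; have nonfrac : ~~ fractional v.
  by rewrite /fractional; case: Req_EM_T => // h0; case: Req_EM_T => // h1; case: hv.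
apply: proper_card; apply/properP; split.
  by apply/subsetP => j; rewrite !inE /pin; case: eqP => // _; rewrite (negbTE nonfrac).
by exists i; rewrite inE // /pin eqxx.
Qed.

Lemma integral_is_chi x : (forall j, ~~ fractional (x j)) -> x = chi (supp x).
Proof.
move=> h; apply: functional_extensionality => j; have := h j.
rewrite /chi /supp inE /fractional.
by case: (Req_EM_T (x j) 1); case: (Req_EM_T (x j) 0).
Qed.

Lemma fractional_ind (P : point m -> Prop) :
  (forall S0, P (chi S0)) ->
  (forall x i, fractional (x i) -> P (pin x i 0) -> P (pin x i 1) -> P x) ->
  forall x, P x.
Proof.
move=> hchi hstep x; have [n] := ubnP (num_fractional x).
elim: n x => [|n IH] x //; rewrite ltnS => hn.
case: (pickP (fun j => fractional (x j))) => [i hi | integral].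
  apply: (hstep x i hi); apply: IH.
    exact: leq_trans (pin_num_fractional hi (or_introl erefl)) hn.
  exact: leq_trans (pin_num_fractional hi (or_intror erefl)) hn.
by rewrite (integral_is_chi (fun j => negbT (integral j))).
Qed.

Lemma ml_const x k : multilinear (fun _ => k) x = k.
Proof.
elim/fractional_ind: x => [S0 | x i _ IH0 IH1]; first by rewrite ml_chi.
by rewrite (ml_condition x i) IH0 IH1; ring.
Qed.

Lemma harris x F G : in01 x ->
  (forall S T, S \subset T -> F T <= F S) ->
  (forall S T, S \subset T -> G S <= G T) ->
  multilinear (fun S => F S * G S) x <= multilinear F x * multilinear G x.
Proof.
move=> + hF hG; elim/fractional_ind: x => [S0 _ | x i _ IH0 IH1 hx].
  by rewrite !ml_chi; apply: Rle_refl.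
have hx0 : in01 (pin x i 0) by apply: in01_pin => //; lra.
have hx1 : in01 (pin x i 1) by apply: in01_pin => //; lra.
have F10 : multilinear F (pin x i 1) <= multilinear F (pin x i 0).
  by rewrite ml_pin1; apply: ml_le => // S; apply: hF; apply: subsetUr.
have G01 : multilinear G (pin x i 0) <= multilinear G (pin x i 1).
  by rewrite ml_pin1; apply: ml_le => // S; apply: hG; apply: subsetUr.
have {}IH0 := IH0 hx0; have {}IH1 := IH1 hx1; have ti := hx i.
rewrite !(ml_condition x i).
move: ti F10 G01 IH0 IH1; set t := x i.
set a0 := multilinear F (pin x i 0); set a1 := multilinear F (pin x i 1).
set b0 := multilinear G (pin x i 0); set b1 := multilinear G (pin x i 1).
set X0 := multilinear _ (pin x i 0); set X1 := multilinear _ (pin x i 1).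
move=> ti F10 G01 IH0 IH1.
have k0 : (1 - t) * X0 <= (1 - t) * (a0 * b0) by apply: Rmult_le_compat_l; lra.
have k1 : t * X1 <= t * (a1 * b1) by apply: Rmult_le_compat_l; lra.
have : 0 <= (t * (1 - t)) * ((a0 - a1) * (b1 - b0)).
  by apply: Rmult_le_pos; apply: Rmult_le_pos; lra.
nra.
Qed.

End ProductExpectation.

Section IndependentRounding.
Variable m : nat.
Implicit Types (x : point m) (S T : {set 'I_m}) (i : 'I_m).
Variable g : {set 'I_m} -> R.
Hypothesis g_nonneg : forall S, 0 <= g S.
Hypothesis g_mono : forall S T, S \subset T -> g S <= g T.
Hypothesis g_submod : forall S T, g (S :|: T) + g (S :&: T) <= g S + g T.
Hypothesis g_marg : forall T i, 0 <= g (i |: T) - g T <= 1.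
Variable lam : R.
Hypothesis hlam : 0 <= lam <= 1.

Local Notation c := (- lam + lam * lam / 2).

Lemma marginal_antitone i S T : S \subset T -> g (i |: T) - g T <= g (i |: S) - g S.
Proof.
move=> hST.
have hU : (i |: S) :|: T = i |: T by rewrite -setUA (setUidPr hST).
have hI : S \subset (i |: S) :&: T by rewrite subsetI subsetUr hST.
have := g_submod (i |: S) T; have := g_mono hI; rewrite hU.
move: (g (_ :&: _)) => gI; lra.
Qed.

(* Conditioning on a coordinate i, with y = x[i:=0] and t = x i: the factor gained
   is exp(t c (E_y[g(S+i)] - E_y[g])), the increment of E[g] caused by x i. *)
Lemma mgf_condition_step x i : in01 x ->
  multilinear (fun S => exp (- lam * g S)) x <=
  multilinear (fun S => exp (- lam * g S)) (pin x i 0) *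
  exp (x i * c * (multilinear (fun S => g (i |: S)) (pin x i 0)
                  - multilinear g (pin x i 0))).
Proof.
move=> hx; set y := pin x i 0; set t := x i.
set h := fun S => exp (- lam * g S); set d := fun S => g (i |: S) - g S.
have hy : in01 y by apply: in01_pin => //; lra.
have ht : 0 <= t <= 1 := hx i.
have hc : c <= 0 by nra.
have htc : t * c <= 0 by nra.
have h_add S : h (i |: S) <= h S * (1 + c * d S).
  have -> : h (i |: S) = h S * exp (- (lam * d S)).
    by rewrite /h /d -exp_plus; congr exp; ring.
  apply: Rmult_le_compat_l; first by left; apply: exp_pos.
  exact: exp_neg_scaled_le (g_marg S i).
have mix : multilinear h x <= multilinear (fun S => h S * (1 + t * c * d S)) y.
  rewrite (ml_condition x i) ml_pin1 -/y -/t.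
  have -> : (fun S => h S * (1 + t * c * d S)) =
            (fun S => (1 - t) * h S + t * (h S * (1 + c * d S))).
    by apply: functional_extensionality => S; ring.
  rewrite ml_add !ml_scale; apply: Rplus_le_compat_l.
  by apply: Rmult_le_compat_l; [lra | exact: ml_le hy h_add].
have corr : multilinear (fun S => h S * (1 + t * c * d S)) y <=
            multilinear h y * multilinear (fun S => 1 + t * c * d S) y.
  apply: harris => // S T hST; first by apply: exp_le_mono; have := g_mono hST; nra.
  by have := marginal_antitone i hST; rewrite /d; nra.
have mean : multilinear (fun S => 1 + t * c * d S) y =
            1 + t * c * (multilinear (fun S => g (i |: S)) y - multilinear g y).
  have -> : (fun S => 1 + t * c * d S) =
            (fun S => 1 + (t * c * g (i |: S) + - (t * c) * g S)).
    by apply: functional_extensionality => S; rewrite /d; ring.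
  by rewrite ml_add ml_const ml_add !ml_scale; ring.
have hy0 : 0 <= multilinear h y by apply: ml_ge0 => // S; left; apply: exp_pos.
apply: (Rle_trans _ _ _ mix); apply: (Rle_trans _ _ _ corr); rewrite mean.
by apply: Rmult_le_compat_l => //; apply: exp_ineq1_le.
Qed.

Theorem mgf_independent x : in01 x ->
  multilinear (fun S => exp (- lam * g S)) x <= exp (c * multilinear g x).
Proof.
elim/fractional_ind: x => [S0 _ | x i _ IH0 _ hx].
  by rewrite !ml_chi; apply: exp_le_mono; have := g_nonneg S0; nra.
have hy : in01 (pin x i 0) by apply: in01_pin => //; lra.
apply: (Rle_trans _ _ _ (mgf_condition_step i hx)).
have -> : c * multilinear g x =
          c * multilinear g (pin x i 0) +
          x i * c * (multilinear (fun S => g (i |: S)) (pin x i 0) - multilinear g (pin x i 0)).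
  by rewrite (ml_condition x i) ml_pin1; ring.
rewrite exp_plus; apply: Rmult_le_compat_r; [left; apply: exp_pos | exact: IH0 hy].
Qed.

End IndependentRounding.

Section BasePolytope.
Variable m : nat.
Variable B : {set {set 'I_m}}.
Implicit Types (x p : point m) (S : {set 'I_m}).

Lemma base_polytope_in01 x : in_base_polytope B x -> in01 x.
Proof.
case=> lam [lam_ge0 [_ [lam_sum hx]]] j; rewrite hx; split.
  by apply: sum_Rge0 => S _; apply: Rmult_le_pos => //; rewrite /chi; case: ifP; lra.
rewrite -lam_sum; apply: sum_Rle => S _.
by have := lam_ge0 S; rewrite /chi; case: ifP => _; lra.
Qed.

Lemma base_polytope_chi S : S \in B -> in_base_polytope B (chi S).
Proof.
move=> hS; exists (fun T => if T == S then 1 else 0); split; [|split; [|split]].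
- by move=> T; case: eqP; lra.
- by move=> T hT; case: eqP => // eTS; move: hT; rewrite eTS hS.
- by rewrite -big_mkcond /= big_pred1_eq.
- move=> i; rewrite (bigD1 S) //= eqxx big1 => [|T /negbTE ->]; ring.
Qed.

Lemma base_polytope_peel p (lam : {set 'I_m} -> R) S1 t :
  (forall S, 0 <= lam S) -> (forall S, S \notin B -> lam S = 0) ->
  \big[Rplus/0]_S lam S = 1 ->
  (forall i, p i = \big[Rplus/0]_S (lam S * chi S i)) ->
  0 < t <= lam S1 -> t < 1 ->
  in_base_polytope B (fun i => (p i - t * chi S1 i) / (1 - t)).
Proof.
move=> lam_ge0 lam_off lam_sum hp ht ht1.
have hk : 0 < / (1 - t) by apply: Rinv_0_lt_compat; lra.
pose peel S := if S == S1 then t else 0.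
have peel_sum (F : {set 'I_m} -> R) :
    \big[Rplus/0]_S (peel S * F S) = t * F S1.
  rewrite (bigD1 S1) //= /peel eqxx big1 => [|S /negbTE ->]; ring.
exists (fun S => / (1 - t) * lam S + - / (1 - t) * peel S).
split; [|split; [|split]].
- move=> S; rewrite /peel; case: eqP => [-> | _]; last by have := lam_ge0 S; nra.
  have -> : / (1 - t) * lam S1 + - / (1 - t) * t = / (1 - t) * (lam S1 - t) by ring.
  by apply: Rmult_le_pos; lra.
- move=> S hS; rewrite lam_off // /peel; case: eqP => [eS | _]; last by ring.
  by move: ht; rewrite -eS lam_off //; lra.
- have -> : \big[Rplus/0]_S (/ (1 - t) * lam S + - / (1 - t) * peel S) =
            / (1 - t) * \big[Rplus/0]_S lam S + - / (1 - t) * (t * 1).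
    rewrite -(peel_sum (fun _ => 1)) !big_distrr -big_split /=.
    by apply: eq_bigr => S _; ring.
  by rewrite lam_sum; field; lra.
- move=> i; rewrite hp.
  have -> : \big[Rplus/0]_S ((/ (1 - t) * lam S + - / (1 - t) * peel S) * chi S i) =
            / (1 - t) * \big[Rplus/0]_S (lam S * chi S i) + - / (1 - t) * (t * chi S1 i).
    rewrite -(peel_sum (fun S => chi S i)) !big_distrr -big_split /=.
    by apply: eq_bigr => S _; ring.
  by field; lra.
Qed.

(* Every extreme point of the hull of the chi(S), S in B, is one of them: if
   chi(S1) has positive weight, p is a proper convex combination of chi(S1)
   and the peeled point, which must then coincide. *)
Lemma extreme_is_chi p : extreme (in_base_polytope B) p -> exists S, p = chi S.
Proof.
case=> hP hext; have [lam [lam_ge0 [lam_off [lam_sum hp]]]] := hP.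
have [S1 hS1] : exists S1, 0 < lam S1.
  apply: NNPP => none; move: lam_sum; rewrite big1 => [|S _]; first lra.
  have := lam_ge0 S; have : ~ 0 < lam S by move=> h; apply: none; exists S.
  lra.
have lam1 : lam S1 <= 1.
  rewrite -lam_sum (bigD1 S1) //=; set rest := \big[Rplus/0]_(_ | _) _.
  have : 0 <= rest by apply: sum_Rge0.
  lra.
have S1B : S1 \in B by apply: contraT => /lam_off; lra.
set t := lam S1 / 2; have ht : 0 < t < 1 by rewrite /t; lra.
set z := fun i => (p i - t * chi S1 i) / (1 - t).
have hz : in_base_polytope B z.
  by apply: (base_polytope_peel lam_ge0 lam_off lam_sum hp); rewrite /t; lra.
have hsplit i : p i = t * chi S1 i + (1 - t) * z i by rewrite /z; field; lra.
have same := hext _ _ t (base_polytope_chi S1B) hz ht hsplit.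
exists S1; apply: functional_extensionality => i.
by rewrite hsplit (same i : chi S1 i = z i); ring.
Qed.

End BasePolytope.

Section PipageRounding.
Variable m : nat.
Implicit Types (x p : point m) (S : {set 'I_m}) (H : {set 'I_m} -> R) (a b : 'I_m).

Lemma move0 p a b : move p a b 0 = p.
Proof. by apply: functional_extensionality => j; rewrite /move; ring. Qed.

Lemma move_a p a b z : a != b -> move p a b z a = p a + z.
Proof. by move=> hab; rewrite /move eqxx (negbTE hab); ring. Qed.

Lemma move_b p a b z : a != b -> move p a b z b = p b - z.
Proof. by move=> hab; rewrite /move eqxx eq_sym (negbTE hab); ring. Qed.

Lemma pin_move p a b z : pin (pin (move p a b z) a 0) b 0 = pin (pin p a 0) b 0.
Proof.
apply: functional_extensionality => j; rewrite /pin /move.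
by case: (j == b) => //; case: (j == a) => //; ring.
Qed.

Lemma ml_two_coords x a b H : a != b ->
  multilinear H x =
  (1 - x a) * ((1 - x b) * multilinear H (pin (pin x a 0) b 0)
               + x b * multilinear (fun S => H (b |: S)) (pin (pin x a 0) b 0))
  + x a * ((1 - x b) * multilinear (fun S => H (a |: S)) (pin (pin x a 0) b 0)
           + x b * multilinear (fun S => H (a |: (b |: S))) (pin (pin x a 0) b 0)).
Proof.
move=> hab; have xb : pin x a 0 b = x b by rewrite /pin eq_sym (negbTE hab).
rewrite (ml_condition x a) ml_pin1 (ml_condition _ b H).
by rewrite (ml_condition _ b (fun S => H (a |: S))) !ml_pin1 xb.
Qed.

(* One pipage step does not increase E[H] for H supermodular on {a, b}: the
   map z |-> E_{p+z(e_a-e_b)}[H] is a concave quadratic, and the step is a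
   mean-preserving choice between z = l < 0 and z = u > 0. *)
Lemma ml_pipage_step p a b l u H : in01 p -> a != b -> l < 0 -> 0 < u ->
  (forall S, H (a |: S) + H (b |: S) <= H S + H (a |: (b |: S))) ->
  u / (u - l) * multilinear H (move p a b l)
  + - l / (u - l) * multilinear H (move p a b u) <= multilinear H p.
Proof.
move=> hp hab hl hu hH.
rewrite (ml_two_coords (move p a b l) H hab) (ml_two_coords (move p a b u) H hab).
rewrite (ml_two_coords p H hab) !pin_move !move_a // !move_b //.
set y := pin (pin p a 0) b 0.
have h01 : 0 <= 0 <= 1 by lra.
have hy : in01 y := in01_pin b (in01_pin a hp h01) h01.
have hsum : multilinear (fun S => H (a |: S)) y + multilinear (fun S => H (b |: S)) y <=
            multilinear H y + multilinear (fun S => H (a |: (b |: S))) y.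
  by rewrite -!ml_add; apply: ml_le.
move: hsum; set h0 := multilinear H y; set ha := multilinear (fun S => H (a |: S)) y.
set hb := multilinear (fun S => H (b |: S)) y.
set hab' := multilinear (fun S => H (a |: (b |: S))) y => hsum.
have -> : forall pa pb,
  u / (u - l) * ((1 - (pa + l)) * ((1 - (pb - l)) * h0 + (pb - l) * hb) +
                 (pa + l) * ((1 - (pb - l)) * ha + (pb - l) * hab')) +
  - l / (u - l) * ((1 - (pa + u)) * ((1 - (pb - u)) * h0 + (pb - u) * hb) +
                   (pa + u) * ((1 - (pb - u)) * ha + (pb - u) * hab')) =
  (1 - pa) * ((1 - pb) * h0 + pb * hb) + pa * ((1 - pb) * ha + pb * hab')
  + u * l * (h0 + hab' - ha - hb).
  by move=> pa pb; field; lra.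
have hul : u * l <= 0 by nra.
have : u * l * (h0 + hab' - ha - hb) <= 0 by nra.
lra.
Qed.

Lemma pipage_range_sign (P : point m -> Prop) p a b l u :
  (exists eps, 0 < eps /\ forall z, Rabs z < eps -> P (move p a b z)) ->
  (forall z, P (move p a b z) -> l <= z) -> (forall z, P (move p a b z) -> z <= u) ->
  l < 0 < u.
Proof.
case=> eps [heps hnb] hl hu.
have hm : Rabs (- (eps / 2)) < eps by rewrite Rabs_Ropp Rabs_right; lra.
have hp : Rabs (eps / 2) < eps by rewrite Rabs_right; lra.
by have := hl _ (hnb _ hm); have := hu _ (hnb _ hp); lra.
Qed.

Lemma prob_f_le_cat (D1 D2 : seq (R * point m)) f c :
  prob_f_le (D1 ++ D2) f c = prob_f_le D1 f c + prob_f_le D2 f c.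
Proof.
rewrite /prob_f_le; elim: D1 => [|wp D1 IH] /=; first ring.
by rewrite IH; ring.
Qed.

Lemma prob_f_le_scale (D : seq (R * point m)) f c k :
  prob_f_le (map (scale_entry k) D) f c = k * prob_f_le D f c.
Proof.
rewrite /prob_f_le; elim: D => [|[w q] D IH] /=; first ring.
by rewrite IH; case: Rle_dec => hfc /=; ring.
Qed.

Lemma supp_chi S : supp (chi S) = S.
Proof.
by apply/setP => j; rewrite inE /chi; case: (j \in S); case: Req_EM_T => // h; lra.
Qed.

Variable f : {set 'I_m} -> R.
Hypothesis f_mono : forall S T : {set 'I_m}, S \subset T -> f S <= f T.
Hypothesis f_submod : forall S T : {set 'I_m}, f (S :|: T) + f (S :&: T) <= f S + f T.
Variable lam : R.
Hypothesis hlam : 0 <= lam.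

Lemma exp_neg_f_supermod a b S :
  exp (- lam * f (a |: S)) + exp (- lam * f (b |: S)) <=
  exp (- lam * f S) + exp (- lam * f (a |: (b |: S))).
Proof.
apply: exp_neg_supermod => //; [exact: f_mono (subsetUr _ _) .. |].
have hU : (a |: S) :|: (b |: S) = a |: (b |: S).
  by apply/setP => j; rewrite !inE; case: (j == a); case: (j == b); case: (j \in S).
have hI : S \subset (a |: S) :&: (b |: S) by rewrite subsetI !subsetUr.
have := f_submod (a |: S) (b |: S); have := f_mono hI; rewrite hU.
move: (f (_ :&: _)) => fI; lra.
Qed.

Lemma pipage_mgf_bound B c p D : pipage (in_base_polytope B) p D ->
  prob_f_le D f c <= exp (lam * c) * multilinear (fun S => exp (- lam * f S)) p.
Proof.
elim=> {p D} [p hext | p a b l u D1 D2 _ hab hnb _ hl _ hu _ IH1 _ IH2].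
  have [S ->] := extreme_is_chi hext.
  rewrite /prob_f_le /= supp_chi ml_chi Rplus_0_r -exp_plus.
  case: Rle_dec => hfc /=; last by left; apply: exp_pos.
  by have := exp_ineq1_le (lam * c + - lam * f S); nra.
have [hl0 hu0] := pipage_range_sign hnb hl hu.
have hp : in01 p.
  apply: (@base_polytope_in01 _ B); rewrite -(move0 p a b).
  by case: hnb => eps [heps hnb]; apply: hnb; rewrite Rabs_R0.
have wl : 0 <= u / (u - l) by apply: Rmult_le_pos; [lra | left; apply: Rinv_0_lt_compat; lra].
have wu : 0 <= - l / (u - l) by apply: Rmult_le_pos; [lra | left; apply: Rinv_0_lt_compat; lra].
have step := ml_pipage_step hp hab hl0 hu0 (exp_neg_f_supermod a b).
have step_scaled := Rmult_le_compat_l _ _ _ (Rlt_le _ _ (exp_pos (lam * c))) step.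
rewrite prob_f_le_cat !prob_f_le_scale.
have := Rmult_le_compat_l _ _ _ wl IH1; have := Rmult_le_compat_l _ _ _ wu IH2.
lra.
Qed.

End PipageRounding.

Theorem corollary3p4 (m : nat) (B : {set {set 'I_m}})
  (hB : is_matroid_bases B)
  (x0 : point m) (hx0 : in_base_polytope B x0)
  (f : {set 'I_m} -> R)
  (f_nonneg : forall S, (0 <= f S)%R)
  (f_mono : forall S T : {set 'I_m}, S \subset T -> (f S <= f T)%R)
  (f_submod : forall S T : {set 'I_m}, (f (S :|: T) + f (S :&: T) <= f S + f T)%R)
  (f_marg : forall (T : {set 'I_m}) (i : 'I_m),
      (0 <= f (i |: T) - f T <= 1)%R)
  (D : seq (R * point m)) (hD : pipage (in_base_polytope B) x0 D)
  (delta : R) (hdelta : (0 <= delta < 1)%R) :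
  (prob_f_le D f ((1 - delta) * multilinear f x0)
     <= exp (- (delta ^ 2 * multilinear f x0) / 2))%R.
Proof.
set mu := multilinear f x0.
have hdelta1 : 0 <= delta <= 1 by lra.
have chernoff := pipage_mgf_bound f_mono f_submod (proj1 hdelta) ((1 - delta) * mu) hD.
have indep := mgf_independent f_nonneg f_mono f_submod f_marg hdelta1 (base_polytope_in01 hx0).
apply: (Rle_trans _ _ _ chernoff).
apply: (Rle_trans _ _ _ (Rmult_le_compat_l _ _ _ (Rlt_le _ _ (exp_pos _)) indep)).
by rewrite -exp_plus; right; congr exp; rewrite /mu; field.
Qed.
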